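(* Let $p$ be a prime and write $T_p(z)=\prod_{j=1}^{\infty}(1-z^{p^{j}})^{-1/p^{j}}=\sum_{n\ge0}t_p(n)z^n$ for $|z|<1$. For all $n\ge0$, the coefficient $t_p(n)$ is a rational number whose denominator contains no prime factor other than $p$; that is, \[ t_p(n)\in\left\{\frac{a}{p^k}: a\in\mathbb{Z},\ k\ge 0\right\}. \]
   Context: For $|z|<1$, each factor $(1-z^{p^j})^{-1/p^j}$ is defined using the principal branch; the product converges absolutely and defines an analytic function on the open unit disk, whose Taylor expansion at $0$ has coefficients $t_p(n)$. *)

From mathcomp Require Import all_boot all_order all_algebra.
From mathcomp Require Import all_classical all_reals all_analysis.
Set Implicit Arguments. Unset Strict Implicit. Unset Printing Implicit Defensive.
Import Order.TTheory GRing.Theory Num.Theory.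
Local Open Scope ring_scope.

(* N-th partial product  prod_{j=1}^{N} (1 - z^{p^j})^{-1/p^j},
   for real z with |z| < 1 (then 1 - z^{p^j} > 0 and the principal-branch
   power is the real power powR). *)
Definition Tp_partial (R : realType) (p : nat) (z : R) (N : nat) : R :=
  \prod_(1 <= j < N.+1) powR (1 - z ^+ (p ^ j)) (- ((p ^ j)%:R)^-1).

Definition in_Z_inv_p (R : realType) (p : nat) (x : R) : Prop :=
  exists (a : int) (k : nat), x = a%:~R / (p ^ k)%:R.

From HB Require Import structures.
From mathcomp Require Import all_boot all_order all_algebra.
From mathcomp Require Import all_classical all_reals all_analysis.
From mathcomp Require Import ring lra.
Import Order.TTheory GRing.Theory Num.Theory numFieldNormedType.Exports.
Set Implicit Arguments.
Unset Strict Implicit.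
Local Open Scope classical_set_scope.
Local Open Scope ring_scope.

(* Telescoping the partial products gives the functional equation
   T(z)^p (1 - z^p) = T(z^p) for |z| < 1. Let F_n = sum_(k < n) t(k) X^k.
   Since T - F_(n+1) = O(z^(n+1)) as z -> 0+, so is the polynomial
   F_(n+1)^p (1 - X^p) - F_(n+1)(X^p), whose coefficient of X^n therefore
   vanishes. That coefficient is the one for F_n, an integer polynomial
   expression in t(0), ..., t(n-1), plus p t(n) t(0)^(p-1), and t(0) = 1;
   so by induction every t(n) lies in Z[1/p]. *)

(* Membership is written [x * p^k = a] rather than [x = a / p^k] so that the
   closure properties hold without assuming [p != 0]. *)
Definition Zinvp (R : pzRingType) (p : nat) : {pred R} :=
  fun x => `[< exists (a : int) (k : nat), x * (p ^ k)%:R = a%:~R >].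
Arguments Zinvp : clear implicits.

Lemma Zinvp_subring_closed (R : comPzRingType) (p : nat) : subring_closed (Zinvp R p).
Proof.
split.
- by apply/asboolP; exists 1, 0%N; rewrite mulr1.
- move=> x y /asboolP[a [k xk]] /asboolP[b [l yl]]; apply/asboolP.
  exists (a * (p ^ l)%:Z - b * (p ^ k)%:Z), (k + l)%N.
  have -> : (x - y) * (p ^ (k + l))%:R =
      x * (p ^ k)%:R * (p ^ l)%:R - y * (p ^ l)%:R * (p ^ k)%:R.
    by rewrite expnD natrM; ring.
  by rewrite xk yl rmorphB !rmorphM /= !pmulrn.
- move=> x y /asboolP[a [k xk]] /asboolP[b [l yl]]; apply/asboolP.
  exists (a * b), (k + l)%N.
  by rewrite expnD natrM mulrACA xk yl rmorphM.
Qed.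

HB.instance Definition _ (R : comPzRingType) (p : nat) :=
  GRing.isSubringClosed.Build R (Zinvp R p) (Zinvp_subring_closed R p).

Lemma Zinvp_natV (R : numFieldType) (p : nat) : (0 < p)%N -> p%:R^-1 \in Zinvp R p.
Proof.
by move=> p_gt0; apply/asboolP; exists 1, 1%N; rewrite expn1 mulVf ?pnatr_eq0 -?lt0n.
Qed.

Lemma Zinvp_in_Z_inv_p (R : realType) (p : nat) (x : R) :
  (0 < p)%N -> x \in Zinvp R p -> in_Z_inv_p p x.
Proof.
move=> p_gt0 /asboolP[a [k xk]]; exists a, k.
by rewrite -xk mulfK // pnatr_eq0 -lt0n expn_gt0 p_gt0.
Qed.

Lemma normr_horner_le (R : numDomainType) (P : {poly R}) (z : R) :
  `|z| <= 1 -> `|P.[z]| <= \sum_(i < size P) `|P`_i|.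
Proof.
move=> z_le1; rewrite horner_coef; apply: (le_trans (ler_norm_sum _ _ _)).
apply: ler_sum => i _; rewrite normrM normrX ler_piMr //.
exact: exprn_ile1.
Qed.

Lemma normrXB_le (R : numDomainType) (x y B : R) (n : nat) :
  `|x| <= B -> `|y| <= B -> `|x ^+ n - y ^+ n| <= n%:R * B ^+ n.-1 * `|x - y|.
Proof.
move=> xB yB; case: n => [|n]; first by rewrite !expr0 subrr normr0 mul0r.
rewrite subrXX normrM mulrC ler_wpM2r //.
have -> : n.+1%:R * B ^+ n.+1.-1 = \sum_(i < n.+1) B ^+ n.
  by rewrite sumr_const card_ord mulr_natl.
apply: (le_trans (ler_norm_sum _ _ _)); apply: ler_sum => i _.
rewrite normrM !normrX /= -[in B ^+ n](subnK (ltnSE (ltn_ord i))) exprD.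
by apply: ler_pM; rewrite ?exprn_ge0 // lerXn2r // nnegrE (le_trans _ xB).
Qed.

Lemma horner0_eq0_bigO (R : realType) (P : {poly R}) (C d : R) (m : nat) :
  0 < d -> (forall z, 0 < z < d -> `|P.[z]| <= C * z ^+ m.+1) -> P.[0] = 0.
Proof.
move=> d_gt0 PC; apply/normr0_eq0.
have normP_cvg : `|P.[z]| @[z --> 0^'+] --> `|P.[0]|.
  by apply: cvg_at_right_filter; apply: cvg_norm; exact: continuous_horner.
pose Q : {poly R} := C *: 'X^(m.+1).
have Q_cvg0 : Q.[z] @[z --> 0^'+] --> 0.
  have Q0 : Q.[0] = 0 by rewrite /Q hornerZ hornerXn expr0n mulr0.
  by rewrite -{2}Q0; apply: cvg_at_right_filter; exact: continuous_horner.
have normP_cvg0 : `|P.[z]| @[z --> 0^'+] --> 0.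
  apply: (@squeeze_cvgr _ _ _ _ (cst 0) (horner Q)); last 2 first.
  - exact: cvg_cst.
  - exact: Q_cvg0.
  near=> z; rewrite normr_ge0 /Q hornerZ hornerXn /=; apply: PC.
  apply/andP; split; near: z; [exact: nbhs_right_gt | exact: nbhs_right_lt].
exact: (cvg_unique _ normP_cvg normP_cvg0).
Unshelve. all: by end_near.
Qed.

Lemma coef_eq0_bigO (R : realType) (m : nat) (P : {poly R}) (C d : R) :
  0 < d -> (forall z, 0 < z < d -> `|P.[z]| <= C * z ^+ m) ->
  forall k, (k < m)%N -> P`_k = 0.
Proof.
elim: m P => [//|m IHm] P d_gt0 PC k.
have /factor_theorem[Q PQ] : root P 0 by apply/eqP; exact: horner0_eq0_bigO PC.
rewrite {}PQ polyC0 subr0 in PC *; rewrite coefMX.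
case: k => [//|k] /= ltkm; apply: (IHm Q d_gt0) => // z /[dup] z_range /andP[z_gt0 _].
have := PC z z_range; rewrite hornerMX normrM (gtr0_norm z_gt0) exprSr mulrA.
by rewrite ler_pM2r.
Qed.

Lemma series_tail_le (R : realType) (u : R ^nat) (M w a : R) (m : nat) :
  (forall k, `|u k| <= M * 2 ^+ k) -> 0 < w <= 4^-1 ->
  series (fun k => u k * w ^+ k) @ \oo --> a ->
  `|a - \sum_(k < m) u k * w ^+ k| <= 2 * M * (2 * w) ^+ m.
Proof.
move=> uM /andP[w_gt0 w_le] ua.
have M_ge0 : 0 <= M by have := uM 0%N; rewrite expr0 mulr1; apply: le_trans.
have w2_gt0 : 0 < 2 * w by rewrite mulr_gt0.
have w2_lt1 : `|2 * w| < 1 by rewrite gtr0_norm //; lra.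
have tail_cvg : `|series (fun k => u k * w ^+ k) N - \sum_(k < m) u k * w ^+ k|
    @[N --> \oo] --> `|a - \sum_(k < m) u k * w ^+ k|.
  by apply: cvg_norm; apply: cvgB => //; exact: cvg_cst.
rewrite -(cvg_lim _ tail_cvg) //; apply: limr_le; first exact: cvgP tail_cvg.
near=> N; have mN : (m <= N)%N by near: N; exact: nbhs_infty_ge.
rewrite /series /= -(subnKC mN) (big_cat_nat (leq0n m) (leq_addr _ _)) /=.
rewrite big_mkord addrAC subrr add0r.
apply: (le_trans (ler_norm_sum _ _ _)).
apply: (@le_trans _ _ (M * \sum_(m <= k < m + (N - m)) (2 * w) ^+ k)).
  rewrite mulr_sumr; apply: ler_sum => k _.
  rewrite normrM normrX (gtr0_norm w_gt0) exprMn mulrA.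
  by rewrite ler_wpM2r // exprn_ge0 // ltW.
rewrite geometric_partial_tail [2 * M]mulrC -mulrA ler_wpM2l //.
apply: (le_trans (geometric_le_lim _ (exprn_ge0 _ (ltW w2_gt0)) w2_gt0 w2_lt1)).
rewrite [X in _ <= X]mulrC ler_wpM2l ?exprn_ge0 ?(ltW w2_gt0) //.
rewrite (@invf_ple _ (1 - 2 * w) 2) ?posrE; lra.
Unshelve. all: by end_near.
Qed.

Lemma Tp_partialS (R : realType) (p : nat) (z : R) (N : nat) :
  (0 < p)%N -> `|z| < 1 ->
  Tp_partial p z N.+1 ^+ p * (1 - z ^+ p) = Tp_partial p (z ^+ p) N.
Proof.
move=> p_gt0 z_lt1.
have p_neq0 : p%:R != 0 :> R by rewrite pnatr_eq0 -lt0n.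
have powRX (x r : R) n : x `^ r ^+ n = x `^ (r * n%:R).
  by rewrite powRrM powR_mulrn // powR_ge0.
have zp_gt0 : 0 < 1 - z ^+ p.
  by rewrite subr_gt0 (le_lt_trans (ler_norm _)) // normrX exprn_ilt1 // -lt0n.
rewrite /Tp_partial big_ltn // exprMn -prodrXl mulrAC expn1 powRX mulNr mulVf //.
rewrite powRN powRr1 ?ltW // mulVf ?gt_eqF // mul1r big_add1 /=.
by apply: eq_bigr => j _; rewrite powRX expnS exprM natrM invfM mulNr mulrAC mulVf // mul1r.
Qed.

Lemma coef_exprD_scaleXn (R : comNzRingType) (G Q : {poly R}) (c : R) (n p : nat) :
  (0 < n)%N ->
  ((G + c *: 'X^n) ^+ p * Q)`_n = (G ^+ p * Q)`_n + c * p%:R * G`_0 ^+ p.-1 * Q`_0.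
Proof.
move=> n_gt0; case: p => [|p]; first by rewrite !expr0 mulr0 !mul0r addr0.
set F := G + c *: 'X^n; set S := \sum_(i < p.+1) F ^+ (p - i) * G ^+ i.
have F0 : F.[0] = G.[0].
  by rewrite hornerD hornerZ hornerXn expr0n gtn_eqF // mulr0 addr0.
have S0 : S`_0 = p.+1%:R * G`_0 ^+ p.
  rewrite -horner_coef0 horner_sum (eq_bigr (fun=> G`_0 ^+ p)) => [|i _].
    by rewrite sumr_const card_ord mulr_natl.
  by rewrite hornerM !horner_exp F0 -exprD subnK ?horner_coef0 // -ltnS.
have -> : F ^+ p.+1 = G ^+ p.+1 + 'X^n * (c *: S).
  by rewrite -[F ^+ _](subrK (G ^+ p.+1)) subrXX addrC /F addrAC subrr add0r -scalerAl scalerAr.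
by rewrite mulrDl coefD -mulrA coefXnM ltnn subnn coef0M coefZ S0 /= !mulrA.
Qed.

(* Zero for the power series of T_p, by the functional equation
   T(z)^p (1 - z^p) = T(z^p). *)
Definition Tp_defect {R : comNzRingType} (p : nat) (F : {poly R}) : {poly R} :=
  F ^+ p * (1 - 'X^p) - (F \Po 'X^p).

Lemma coef_Tp_defect_addXn (R : comNzRingType) (G : {poly R}) (c : R) (n p : nat) :
  (0 < n)%N -> (1 < p)%N ->
  (Tp_defect p (G + c *: 'X^n))`_n = (Tp_defect p G)`_n + c * p%:R * G`_0 ^+ p.-1.
Proof.
move=> n_gt0 p_gt1; rewrite /Tp_defect !coefB coef_exprD_scaleXn //.
rewrite comp_polyD comp_polyZ comp_Xn_poly -exprM (coefD (G \Po _)) coefZ coefXn.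
have -> : (n == p * n) = false.
  by rewrite -{1}[n]mul1n eqn_mul2r (gtn_eqF n_gt0) eq_sym (gtn_eqF p_gt1).
rewrite mulr0 addr0.
rewrite coefB coef1 coefXn [0%N == p]eq_sym (gtn_eqF (ltnW p_gt1)) subr0 mulr1.
by rewrite addrAC.
Qed.

Lemma Tp_defect_polyOver (R : comNzRingType) (S : subringClosed R) (p : nat) (F : {poly R}) :
  F \is a polyOver S -> Tp_defect p F \is a polyOver S.
Proof.
move=> FS; rewrite /Tp_defect rpredB ?rpredM ?rpredX ?rpredB ?rpred1 ?polyOverXn //.
exact: polyOver_comp (polyOverXn _ _).
Qed.

Section TpCoefficients.

Variables (R : realType) (p : nat) (t : nat -> R).
Hypothesis p_prime : prime p.
Hypothesis Tp_series : forall z : R, `|z| < 1 ->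
  exists l : R, (Tp_partial p z @ \oo --> l) /\ (series (fun n => t n * z ^+ n) @ \oo --> l).

Definition tsum (z : R) : R := limn (series (fun n => t n * z ^+ n)).

Lemma tsum_cvg (z : R) : `|z| < 1 ->
  series (fun n => t n * z ^+ n) @ \oo --> tsum z /\ Tp_partial p z @ \oo --> tsum z.
Proof. by move=> /Tp_series[l [Tl sl]]; rewrite /tsum (cvg_lim _ sl). Qed.

Lemma tsum_feq (z : R) : `|z| < 1 -> tsum z ^+ p * (1 - z ^+ p) = tsum (z ^+ p).
Proof.
move=> z_lt1; have p_gt0 := prime_gt0 p_prime.
have zp_lt1 : `|z ^+ p| < 1 by rewrite normrX exprn_ilt1 // -lt0n.
have [_ Tz] := tsum_cvg z_lt1; have [_ Tzp] := tsum_cvg zp_lt1.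
have Tz_feq : Tp_partial p z N.+1 ^+ p * (1 - z ^+ p) @[N --> \oo] -->
    tsum z ^+ p * (1 - z ^+ p).
  apply: cvgM; last exact: cvg_cst.
  by apply: (continuous_cvg _ (@exprn_continuous R p _)); rewrite cvg_shiftS.
rewrite (funext (fun N => Tp_partialS N p_gt0 z_lt1)) in Tz_feq.
exact: cvg_unique Tz_feq Tzp.
Qed.

Lemma t0_eq1 : t 0 = 1.
Proof.
have [s0 T0] : series (fun n => t n * 0 ^+ n) @ \oo --> tsum 0 /\
    Tp_partial p 0 @ \oo --> tsum 0 by apply: tsum_cvg; rewrite normr0 ltr01.
have T1 : Tp_partial p (0 : R) = cst 1.
  apply: funext => N; rewrite /Tp_partial big1 // => j _.
  by rewrite expr0n expn_eq0 (gtn_eqF (prime_gt0 p_prime)) /= mulr0n subr0 powR1.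
have s1 : [sequence series (fun n => t n * 0 ^+ n) N.+1]_N = cst (t 0).
  apply: funext => N; rewrite /series /= big_nat_recl // expr0 mulr1 big1 ?addr0 //.
  by move=> i _; rewrite expr0n mulr0.
rewrite T1 in T0; rewrite -cvg_shiftS s1 in s0.
have -> : t 0 = tsum 0 by exact: (cvg_unique _ (cvg_cst _) s0).
exact: (cvg_unique _ T0 (cvg_cst (1 : R))).
Qed.

Lemma coef_le_geometric : exists M : R, forall k, `|t k| <= M * 2 ^+ k.
Proof.
have half_lt1 : `|2^-1 : R| < 1 by rewrite ger0_norm; lra.
have [s_half _] := tsum_cvg half_lt1.
have /cvg_series_bounded[M0 [_ M0_bound]] : cvgn (series (fun k => t k * 2^-1 ^+ k)).
  by apply/cvg_ex; exists (tsum 2^-1).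
exists (`|M0| + 1) => k.
have M0_lt : M0 < `|M0| + 1 by rewrite (le_lt_trans (ler_norm _)) // ltrDl.
have := M0_bound _ M0_lt k I.
by rewrite /= normrM normrX [`|2^-1|]ger0_norm // exprVn ler_pdivrMr // exprn_gt0.
Qed.

Lemma tsum_trunc_bigO (n : nat) : exists2 C : R, 0 <= C &
  forall z, 0 < z <= 4^-1 -> `|tsum z - (\poly_(k < n) t k).[z]| <= C * z ^+ n.
Proof.
have [M tM] := coef_le_geometric.
have M_ge0 : 0 <= M by have := tM 0%N; rewrite expr0 mulr1; exact: le_trans.
exists (2 * M * 2 ^+ n); first by rewrite !mulr_ge0 ?exprn_ge0.
move=> z /[dup] z_range /andP[z_gt0 z_le].
have z_lt1 : `|z| < 1 by rewrite gtr0_norm //; lra.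
have [s_z _] := tsum_cvg z_lt1.
by rewrite horner_poly -mulrA -exprMn; exact: series_tail_le.
Qed.

Lemma Tp_defect_trunc_bigO (n : nat) : exists C : R,
  forall z, 0 < z < 4^-1 -> `|(Tp_defect p (\poly_(k < n) t k)).[z]| <= C * z ^+ n.
Proof.
have [C C_ge0 fF] := tsum_trunc_bigO n.
set F := \poly_(k < n) t k in fF *.
set B := \sum_(i < size F) `|F`_i| + C.
have B_ge0 : 0 <= B by rewrite addr_ge0 // sumr_ge0.
exists (p%:R * B ^+ p.-1 * C + C) => z /andP[z_gt0 z_lt].
have z_range : 0 < z <= 4^-1 by rewrite z_gt0 ltW.
have z_le1 : `|z| <= 1 by rewrite gtr0_norm //; lra.
have zp_le : z ^+ p <= z.
  by rewrite -(prednK (prime_gt0 p_prime)) exprS ler_piMr ?exprn_ile1 ?ltW //; lra.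
have zp_range : 0 < z ^+ p <= 4^-1 by rewrite exprn_gt0 //= (le_trans zp_le) ?ltW.
have zp_norm : `|1 - z ^+ p| <= 1.
  by rewrite ger0_norm ?subr_ge0 ?gerBl ?exprn_ge0 ?ltW //; lra.
have Fz_le : `|F.[z]| <= B by rewrite ler_wpDr // normr_horner_le.
have fz_le : `|tsum z| <= B.
  rewrite -[tsum z](subrK F.[z]) (le_trans (ler_normD _ _)) // addrC lerD //.
    exact: normr_horner_le.
  apply: (le_trans (fF z z_range)); apply: ler_piMr => //.
  by apply: exprn_ile1; [exact: ltW | lra].
have -> : (Tp_defect p F).[z] =
    (F.[z] ^+ p - tsum z ^+ p) * (1 - z ^+ p) - (F.[z ^+ p] - tsum (z ^+ p)).
  rewrite -tsum_feq ?gtr0_norm //; last lra.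
  by rewrite /Tp_defect !hornerE horner_comp !hornerE; ring.
apply: (le_trans (ler_normB _ _)); rewrite [X in _ <= X]mulrDl; apply: lerD.
  rewrite normrM; apply: (le_trans (ler_piMr (normr_ge0 _) zp_norm)).
  apply: (le_trans (normrXB_le _ Fz_le fz_le)).
  rewrite -[X in _ <= X]mulrA ler_wpM2l ?mulr_ge0 ?exprn_ge0 // distrC.
  exact: fF.
rewrite distrC; apply: (le_trans (fF _ zp_range)); rewrite ler_wpM2l //.
by apply: lerXn2r; rewrite // nnegrE ?exprn_ge0 // ltW.
Qed.

Lemma coef_Tp_defect_trunc_eq0 (n : nat) : (Tp_defect p (\poly_(k < n.+1) t k))`_n = 0.
Proof.
have [C defect_bound] := Tp_defect_trunc_bigO n.+1.
by apply: (coef_eq0_bigO _ defect_bound) => //; rewrite invr_gt0.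
Qed.

Lemma t_Zinvp (n : nat) : t n \in Zinvp R p.
Proof.
elim/ltn_ind: n => -[_|n IHn]; first by rewrite t0_eq1 rpred1.
have p_neq0 : p%:R != 0 :> R by rewrite pnatr_eq0 -lt0n prime_gt0.
set D := Tp_defect p (\poly_(k < n.+1) t k).
have trunc_rec : \poly_(k < n.+2) t k = \poly_(k < n.+1) t k + t n.+1 *: 'X^(n.+1).
  by rewrite !poly_def big_ord_recr.
have := coef_Tp_defect_trunc_eq0 n.+1.
rewrite trunc_rec coef_Tp_defect_addXn ?prime_gt1 // -/D coef_poly /= t0_eq1.
rewrite expr1n mulr1 => /eqP; rewrite addr_eq0 => /eqP tn.
have -> : t n.+1 = - D`_n.+1 / p%:R by rewrite tn opprK mulfK.
rewrite rpredM ?rpredN ?Zinvp_natV ?prime_gt0 //.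
by apply/polyOverP/Tp_defect_polyOver/polyOver_poly => k; exact: IHn.
Qed.

End TpCoefficients.

Theorem proposition1p8 (R : realType) (p : nat) (t : nat -> R) :
  prime p ->
  (forall z : R, `|z| < 1 ->
     exists l : R,
       (Tp_partial p z @ \oo --> l) /\
       (series (fun n => t n * z ^+ n) @ \oo --> l)) ->
  forall n : nat, in_Z_inv_p p (t n).
Proof.
move=> p_prime Tp_series n.
exact: Zinvp_in_Z_inv_p (prime_gt0 p_prime) (t_Zinvp p_prime Tp_series n).
Qed.
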